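(* Fix an iteration index $t$ and an agent $p$. Let $w^{t+1},\lambda^t_p,z^t_p\in\mathbb{R}^{J\times K}$, $\rho^t>0$ and $\delta^t>0$ be given and independent of the data. For a dataset $\mathcal{D}$ and $\xi\in\mathbb{R}^{J\times K}$ put $$G^t(z;\mathcal{D},\xi)=\langle f'_p(z^t_p;\mathcal{D}),z\rangle+\tfrac{\rho^t}{2}\big\|w^{t+1}-z+\tfrac{1}{\rho^t}(\lambda^t_p-\xi)\big\|^2,$$ and let $$z^{t+1}_p(\mathcal{D})=\operatorname{argmin}_{z\in\mathcal{W}\cap\widehat{\mathcal{W}}^t_p}\ G^t(z;\mathcal{D},\tilde\xi^t_p),\qquad \widehat{\mathcal{W}}^t_p=\{z\in\mathbb{R}^{J\times K}:\|z-z^t_p\|\le\delta^t\},$$ where $\tilde\xi^t_p$ has i.i.d. Laplace entries with mean $0$ and scale $\bar\Delta^t_p/\bar\epsilon$ (joint density proportional to $\exp(-\bar\epsilon\|\tilde\xi^t_p\|_1/\bar\Delta^t_p)$), with $\bar\epsilon>0$ and $\bar\Delta^t_p=\max_{\mathcal{D}'_p\in\widehat{\mathcal{D}}_p}\|f'_p(z^t_p;\mathcal{D}_p)-f'_p(z^t_p;\mathcal{D}'_p)\|_1$, the same noise distribution being used for $\mathcal{D}_p$ and its neighbours. Then for all measurable $\mathcal{S}\subset\mathbb{R}^{J\times K}$ and all $\mathcal{D}'_p\in\widehat{\mathcal{D}}_p$, $$e^{-\bar\epsilon}\,\mathbb{P}(z^{t+1}_p(\mathcal{D}'_p)\in\mathcal{S})\le\mathbb{P}(z^{t+1}_p(\mathcal{D}_p)\in\mathcal{S})\le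 e^{\bar\epsilon}\,\mathbb{P}(z^{t+1}_p(\mathcal{D}'_p)\in\mathcal{S}).$$
   Context: Setting: $P,J,K$ positive integers; $\mathbb{R}^{J\times K}$ carries the Frobenius inner product and norm $\|\cdot\|$; $\|\cdot\|_1$ is the entrywise $\ell_1$-norm. Agent $p$ holds $\mathcal{D}_p=\{(x_{pi},y_{pi})\}_{i=1}^{I_p}$, $x_{pi}\in\mathbb{R}^J$, $y_{pi}\in\mathbb{R}^K$, $I=\sum_pI_p$. With a convex loss $\varphi(\cdot;x,y)$ and convex regularizer $r$ on $\mathbb{R}^{J\times K}$ and $\beta>0$, $f_p(z;\mathcal{D}_p)=\frac1I\sum_{i=1}^{I_p}\varphi(z;x_{pi},y_{pi})+\frac\beta Pr(z)$, and $f'_p(z;\mathcal{D})$ is a fixed subgradient of $f_p(\cdot;\mathcal{D})$ at $z$. $\mathcal{W}\subset\mathbb{R}^{J\times K}$ is compact convex, and $\mathcal{W}\cap\widehat{\mathcal{W}}^t_p=\{z:h^t_m(z)\le0,\ m\in[M]\}$ with each $h^t_m$ convex and twice continuously differentiable. $\widehat{\mathcal{D}}_p$ is the collection of datasets differing from $\mathcal{D}_p$ in a single entry. *)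

From HB Require Import structures.
From mathcomp Require Import all_boot all_order all_algebra.
From mathcomp Require Import all_classical all_reals all_analysis.
Set Implicit Arguments. Unset Strict Implicit. Unset Printing Implicit Defensive.
Import Order.TTheory GRing.Theory Num.Theory.
Import numFieldNormedType.Exports.
Local Open Scope classical_set_scope.
Local Open Scope ring_scope.

Section Defs.
Variables (R : realType) (J K : nat).
Notation mat := 'M[R]_(J, K).

Definition frob (A B : mat) : R := \sum_(j < J) \sum_(k < K) A j k * B j k.
Definition fnorm (A : mat) : R := Num.sqrt (frob A A).
Definition l1norm (A : mat) : R := \sum_(j < J) \sum_(k < K) `|A j k|.

Definition convex_fun (f : mat -> R) : Prop :=
  forall (a b : mat) (s : R), 0 <= s <= 1 ->
    f (s *: a + (1 - s) *: b) <= s * f a + (1 - s) * f b.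

Definition convex_mset (W : set mat) : Prop :=
  forall (a b : mat) (s : R), 0 <= s <= 1 -> W a -> W b ->
    W (s *: a + (1 - s) *: b).

Definition is_subgradient (f : mat -> R) (z g : mat) : Prop :=
  forall u : mat, f z + frob g (u - z) <= f u.

Definition mx_borel (S : set mat) : Prop := <<s [set U : set mat | open U] >> S.

Definition datum := ('cV[R]_J * 'cV[R]_K)%type.

Definition neighbor (D D' : seq datum) : Prop :=
  exists (i : nat) (e : datum), (i < size D)%N /\ D' = set_nth (0, 0) D i e.

Definition laplace_pdf (b x : R) : R := (2 * b)^-1 * expR (- (`|x| / b)).

End Defs.

Section Defs2.
Variables (R : realType) (J K : nat).
Notation mat := 'M[R]_(J, K).

Definition fobj (Itot P : nat) (beta : R) (phi : mat -> 'cV[R]_J -> 'cV[R]_K -> R)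
  (r : mat -> R) (D : seq (datum R J K)) (z : mat) : R :=
  (Itot%:R)^-1 * \sum_(e <- D) phi z e.1 e.2 + beta / P%:R * r z.

(* G^t(z; D, xi) with g = f'_p(z^t_p; D) *)
Definition Gobj (g w lam xi : mat) (rho : R) (z : mat) : R :=
  frob g z + rho / 2 * (fnorm (w - z + rho^-1 *: (lam - xi))) ^+ 2.

End Defs2.

From HB Require Import structures.
From mathcomp Require Import all_boot all_order all_algebra.
From mathcomp Require Import all_classical all_reals all_analysis.
From mathcomp Require Import ring lra measurable_realfun.
Import Order.TTheory GRing.Theory Num.Theory.
Import numFieldNormedType.Exports.
Local Open Scope classical_set_scope.
Local Open Scope ring_scope.

Set Implicit Arguments.
Unset Strict Implicit.
Unset Printing Implicit Defensive.

(* The minimiser depends on the data only through f'_p(z^t_p; D) + xi: the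
   objectives G^t(.; D', xi) and G^t(.; D_p, xi + v), where
   v = f'_p(z^t_p; D') - f'_p(z^t_p; D_p), differ by a constant and are strongly
   convex, so z^{t+1}_p(D') under the noise xi is z^{t+1}_p(D_p) under xi + v.
   Strong convexity also makes the minimiser continuous in the noise, so the two
   probabilities are those of xi + v and of xi falling in one Borel set A.
   For independent Laplace entries of scale b, shifting the noise by v changes
   the probability of a dyadic cell by a factor at most exp(||v||_1 / b), and
   ||v||_1 / b <= eps.  The bound passes to countable disjoint unions and to
   monotone limits, hence from the ring of unions of dyadic cells of a fixed
   level to all Borel sets (monotone class theorem). *)

Lemma ball_mxE (R : realType) m n (x y : 'M[R]_(m, n)) e :
  ball x e y <-> 0 < e /\ forall i j, `|x i j - y i j| < e.
Proof. by []. Qed.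

Section Frobenius.
Variables (R : realType) (J K : nat).
Local Notation mat := 'M[R]_(J, K).
Implicit Types (a b c : mat).

Lemma frobC a b : frob a b = frob b a.
Proof. by apply: eq_bigr => j _; apply: eq_bigr => k _; rewrite mulrC. Qed.

Lemma frobDl a b c : frob (a + b) c = frob a c + frob b c.
Proof.
rewrite /frob -big_split; apply: eq_bigr => j _.
by rewrite -big_split; apply: eq_bigr => k _; rewrite mxE mulrDl.
Qed.

Lemma frobZl s a c : frob (s *: a) c = s * frob a c.
Proof.
rewrite /frob mulr_sumr; apply: eq_bigr => j _.
by rewrite mulr_sumr; apply: eq_bigr => k _; rewrite mxE mulrA.
Qed.

Lemma frobNl a c : frob (- a) c = - frob a c.
Proof. by rewrite -scaleN1r frobZl mulN1r. Qed.

Lemma frob0l c : frob 0 c = 0.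
Proof. by rewrite -(scale0r 0) frobZl mul0r. Qed.

Lemma frobDr a b c : frob c (a + b) = frob c a + frob c b.
Proof. by rewrite frobC frobDl !(frobC c). Qed.

Lemma frobZr s a c : frob c (s *: a) = s * frob c a.
Proof. by rewrite frobC frobZl frobC. Qed.

Lemma frobNr a c : frob c (- a) = - frob c a.
Proof. by rewrite frobC frobNl frobC. Qed.

Lemma frob0r c : frob c 0 = 0.
Proof. by rewrite frobC frob0l. Qed.

Definition frobE := (frobDl, frobDr, frobNl, frobNr, frobZl, frobZr).

Lemma frob_ge0 a : 0 <= frob a a.
Proof. by apply: sumr_ge0 => j _; apply: sumr_ge0 => k _; rewrite -expr2 sqr_ge0. Qed.

Lemma sqr_entry_le_frob a j k : a j k ^+ 2 <= frob a a.
Proof.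
rewrite /frob (bigD1 j) //= (bigD1 k) //= -addrA expr2 lerDl addr_ge0 //.
  by apply: sumr_ge0 => l _; rewrite -expr2 sqr_ge0.
by apply: sumr_ge0 => i _; apply: sumr_ge0 => l _; rewrite -expr2 sqr_ge0.
Qed.

Lemma frob_le0_eq0 a : frob a a <= 0 -> a = 0.
Proof.
move=> a_le0; apply/matrixP => j k; rewrite mxE.
by apply/eqP; rewrite -sqrf_eq0 eq_le sqr_ge0 (le_trans (sqr_entry_le_frob a j k)).
Qed.

Lemma fnorm_sqr a : fnorm a ^+ 2 = frob a a.
Proof. by rewrite /fnorm sqr_sqrtr // frob_ge0. Qed.

Lemma fnorm_le a e : 0 <= e -> (fnorm a <= e) = (frob a a <= e ^+ 2).
Proof.
by move=> e_ge0; rewrite /fnorm -(ler_sqrt (frob a a)) ?exprn_ge0 // sqrtr_sqr ger0_norm.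
Qed.

Lemma normr_entry_le_fnorm a j k : `|a j k| <= fnorm a.
Proof. by rewrite /fnorm -sqrtr_sqr ler_sqrt ?frob_ge0 // sqr_entry_le_frob. Qed.

Lemma frob_le_entrywise a b e1 e2 : (forall j k, `|a j k| <= e1) ->
  (forall j k, `|b j k| <= e2) -> frob a b <= (J * K)%:R * (e1 * e2).
Proof.
move=> a_le b_le; apply: (@le_trans _ _ (\sum_(j < J) \sum_(k < K) (e1 * e2))).
  apply: ler_sum => j _; apply: ler_sum => k _; apply: le_trans (ler_norm _) _.
  by rewrite normrM ler_pM.
by rewrite !sumr_const !card_ord -mulrnA mulr_natl mulnC.
Qed.

Lemma l1norm_ge0 a : 0 <= l1norm a.
Proof. by apply: sumr_ge0 => j _; apply: sumr_ge0 => k _; exact: normr_ge0. Qed.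

Lemma l1normN a : l1norm (- a) = l1norm a.
Proof. by apply: eq_bigr => j _; apply: eq_bigr => k _; rewrite mxE normrN. Qed.

End Frobenius.

Definition is_argmin {R : numDomainType} {T : Type} (C : set T) (f : T -> R) (a : T) :=
  C a /\ forall z, C z -> f a <= f z.

Section Objective.
Variables (R : realType) (J K : nat) (w lam : 'M[R]_(J, K)) (rho : R).
Hypothesis rho_gt0 : 0 < rho.
Local Notation mat := 'M[R]_(J, K).
Local Notation G g xi := (Gobj g w lam xi rho).
Implicit Types (a b g xi z : mat).

Lemma Gobj_expand g xi z : G g xi z =
  rho / 2 * frob (w + rho^-1 *: (lam - xi)) (w + rho^-1 *: (lam - xi))
  + frob (g - rho *: w - lam + xi) z + rho / 2 * frob z z.
Proof.
rewrite /Gobj fnorm_sqr.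
set c := w + rho^-1 *: (lam - xi).
have -> : w - z + rho^-1 *: (lam - xi) = c - z.
  by apply/matrixP => i j; rewrite !mxE; ring.
have -> : g - rho *: w - lam + xi = g - rho *: c.
  by apply/matrixP => i j; rewrite !mxE; field; rewrite lt0r_neq0.
by clearbody c; rewrite !frobE (frobC z c); field.
Qed.

Lemma GobjB g1 xi1 g2 xi2 z : G g1 xi1 z - G g2 xi2 z =
  G g1 xi1 0 - G g2 xi2 0 + frob (g1 + xi1 - (g2 + xi2)) z.
Proof.
rewrite !Gobj_expand !frob0r.
have -> : g1 + xi1 - (g2 + xi2) =
    (g1 - rho *: w - lam + xi1) - (g2 - rho *: w - lam + xi2).
  by apply/matrixP => i j; rewrite !mxE; ring.
by rewrite [frob (_ - _) z]frobDl frobNl; ring.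
Qed.

Lemma Gobj_midpoint g xi a b :
  G g xi (2^-1 *: a + (1 - 2^-1) *: b) =
  (G g xi a + G g xi b) / 2 - rho / 8 * frob (a - b) (a - b).
Proof. by rewrite !Gobj_expand !frobE (frobC b a); field; rewrite lt0r_neq0. Qed.

Section Argmin.
Variables (W : set mat) (zt : mat) (delta : R).
Hypothesis W_convex : convex_mset W.
Let C := W `&` [set z | fnorm (z - zt) <= delta].

Lemma feasible_midpoint a b : C a -> C b -> C (2^-1 *: a + (1 - 2^-1) *: b).
Proof.
move=> [Wa za] [Wb zb]; split.
  by apply: W_convex => //; rewrite invr_ge0 ler0n /= invf_le1 // ler1n.
have delta_ge0 : 0 <= delta by apply: le_trans za; exact: sqrtr_ge0.
move: za zb; rewrite /= !fnorm_le // => za zb.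
have -> : 2^-1 *: a + (1 - 2^-1) *: b - zt = 2^-1 *: (a - zt) + 2^-1 *: (b - zt).
  by apply/matrixP => i j; rewrite !mxE; field.
have := frob_ge0 ((a - zt) - (b - zt)).
move: za zb; set a' := a - zt; set b' := b - zt; clearbody a' b'.
by rewrite !frobE (frobC b'); lra.
Qed.

(* The midpoint of a and b is feasible, and G lies rho/8 |a - b|^2 below the
   chord there. *)
Lemma argmin_quadratic_growth g xi a b : is_argmin C (G g xi) a -> C b ->
  G g xi a + rho / 4 * frob (a - b) (a - b) <= G g xi b.
Proof.
move=> [Ca a_min] Cb.
by have := a_min _ (feasible_midpoint Ca Cb); rewrite Gobj_midpoint; lra.
Qed.

(* Adding the quadratic growth at a and at b cancels the quadratic parts of the
   two objectives, leaving only their linear parts. *)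
Lemma argmin_stable g1 xi1 g2 xi2 a b :
  is_argmin C (G g1 xi1) a -> is_argmin C (G g2 xi2) b ->
  rho / 2 * frob (a - b) (a - b) <= frob (g1 + xi1 - (g2 + xi2)) (b - a).
Proof.
move=> a_min b_min.
have growth_a := argmin_quadratic_growth a_min b_min.1.
have growth_b := argmin_quadratic_growth b_min a_min.1.
have diff_a := GobjB g1 xi1 g2 xi2 a; have diff_b := GobjB g1 xi1 g2 xi2 b.
have sym : frob (b - a) (b - a) = frob (a - b) (a - b).
  by rewrite -[b - a]opprB frobNl frobNr opprK.
by rewrite [frob _ (b - a)]frobDr frobNr; nra.
Qed.

Lemma argmin_shift_noise g g' xi a b :
  is_argmin C (G g' xi) a -> is_argmin C (G g (xi + (g' - g))) b -> a = b.
Proof.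
move=> a_min b_min; have := argmin_stable a_min b_min.
have -> : g' + xi - (g + (xi + (g' - g))) = 0.
  by apply/matrixP => i j; rewrite !mxE; ring.
rewrite frob0l => ab_le0; apply/subr0_eq/frob_le0_eq0.
by rewrite -(pmulr_rle0 _ (_ : 0 < rho / 2)) // divr_gt0.
Qed.

Section Continuity.
Variables (g : mat) (f : mat -> mat).
Hypothesis f_argmin : forall xi, is_argmin C (G g xi) (f xi).

Lemma argmin_sqr_entry_le xi1 xi2 eta j k :
  (forall j k, `|xi1 j k - xi2 j k| <= eta) ->
  (f xi1 - f xi2) j k ^+ 2 <= 4 * (J * K)%:R * delta / rho * eta.
Proof.
move=> xi_close; apply: le_trans (sqr_entry_le_frob _ j k) _.
have := argmin_stable (f_argmin xi1) (f_argmin xi2).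
have -> : g + xi1 - (g + xi2) = xi1 - xi2.
  by apply/matrixP => i l; rewrite !mxE; ring.
move=> stable.
have xi_close' i l : `|(xi1 - xi2) i l| <= eta by rewrite !mxE; exact: xi_close.
have f_close i l : `|(f xi2 - f xi1) i l| <= delta *+ 2.
  have -> : (f xi2 - f xi1) i l = (f xi2 - zt) i l - (f xi1 - zt) i l.
    by rewrite !mxE; ring.
  apply: le_trans (ler_normB _ _) _; rewrite mulr2n.
  by apply: lerD; apply: le_trans (normr_entry_le_fnorm _ _ _) _;
    [case: (f_argmin xi2) => -[] | case: (f_argmin xi1) => -[]].
have bound := frob_le_entrywise xi_close' f_close.
rewrite -(ler_pM2l (_ : 0 < rho / 2)) ?divr_gt0 //.
suff -> : rho / 2 * (4 * (J * K)%:R * delta / rho * eta) =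
          (J * K)%:R * (eta * (delta *+ 2)) by apply: le_trans stable bound.
by rewrite -mulr_natr; field; rewrite lt0r_neq0.
Qed.

Lemma argmin_continuous : continuous f.
Proof.
move=> x A /nbhs_ballP[e e_gt0 e_A].
have delta_ge0 : 0 <= delta.
  by case: (f_argmin x) => -[_ /= fx_le] _; apply: le_trans fx_le; exact: sqrtr_ge0.
pose L := 4 * (J * K)%:R * delta / rho.
have L_ge0 : 0 <= L by rewrite divr_ge0 ?mulr_ge0 // ltW.
pose eta := e ^+ 2 / (2 * (L + 1)).
have eta_gt0 : 0 < eta by rewrite divr_gt0 ?exprn_gt0 ?mulr_gt0 ?ltr_wpDl.
apply/nbhs_ballP; exists eta => //= y /ball_mxE [_ xy_close].
apply: e_A; apply/ball_mxE; split => // j k.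
have := argmin_sqr_entry_le j k (fun j k => ltW (xy_close j k)).
rewrite !mxE -/L => sqr_le.
rewrite -(ltr_pXn2r (n:=2)) // ?nnegrE ?normr_ge0 ?ltW // real_normK ?num_real //.
apply: le_lt_trans sqr_le _.
have e2_gt0 : 0 < e ^+ 2 by rewrite exprn_gt0.
by rewrite /eta mulrA ltr_pdivrMr ?mulr_gt0 ?ltr_wpDl //; nra.
Qed.

End Continuity.
End Argmin.
End Objective.

Section Translation.
Variable R : realType.
Implicit Types (u : R) (A : set R).

Definition shiftR u : measurableTypeR R -> measurableTypeR R := fun x => x + u.

Lemma measurable_shiftR u : measurable_fun setT (shiftR u).
Proof. exact: measurable_funD. Qed.

(* Makes pushforward lebesgue_measure (shiftR u) a measure. *)
HB.instance Definition _ u :=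
  isMeasurableFun.Build _ _ _ _ (shiftR u) (measurable_shiftR u).

Lemma lebesgue_measure_shiftR u A : measurable A ->
  pushforward lebesgue_measure (shiftR u) A = lebesgue_measure A.
Proof.
move=> mA; apply/esym/lebesgue_measure_unique => //= _ [[a b]] _ <-.
rewrite /pushforward.
have -> : shiftR u @^-1` `]a, b] = `]a - u, b - u]%classic.
  by apply/seteqP; split => x /=; rewrite !in_itv /= /shiftR !lerBrDr ltrBlDr.
rewrite !lebesgue_measure_itv /= !lte_fin ltrD2r.
by case: ifP => // _; rewrite -!EFinD opprB addrA subrK.
Qed.

Lemma ge0_integral_shiftR u A (f : R -> \bar R) :
  measurable A -> measurable_fun setT f -> (forall x, 0 <= f x)%E ->
  (\int[lebesgue_measure]_(x in shiftR u @^-1` A) f x =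
   \int[lebesgue_measure]_(x in A) f (x - u)%R)%E.
Proof.
move=> mA mf f_ge0.
have mf_shift : measurable_fun A (fun x => f (x - u)).
  by apply: measurable_funTS; exact: measurableT_comp mf (measurable_shiftR (- u)).
transitivity (\int[lebesgue_measure]_(x in shiftR u @^-1` A)
    ((fun y => f (y - u)%R) \o shiftR u) x)%E.
  by apply: eq_integral => x _; rewrite /= /shiftR addrK.
rewrite -ge0_integral_pushforward //.
by apply: eq_measure_integral => // B mB _; rewrite /= lebesgue_measure_shiftR.
Qed.

End Translation.

Lemma laplace_pdf0 (R : realType) : laplace_pdf 0 = 0 :> (R -> R).
Proof. by apply/funext => x; rewrite /laplace_pdf mulr0 invr0 mul0r. Qed.

(* With scale 0 the density vanishes (0^-1 = 0), so Pr setT would be 0. *)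
Lemma laplace_law_scale_neq0 (R : realType) d (Omega : measurableType d)
    (Pr : probability Omega R) (X : Omega -> R) b :
  (forall B, measurable B ->
    Pr (X @^-1` B) = (\int[lebesgue_measure]_(x in B) (laplace_pdf b x)%:E)%E) ->
  b != 0.
Proof.
move=> /(_ setT measurableT); rewrite preimage_setT probability_setT.
by apply: contra_eqN => /eqP->; rewrite laplace_pdf0 integral0 eqe oner_eq0.
Qed.

Section Laplace.
Variables (R : realType) (b : R).
Hypothesis b_gt0 : 0 < b.

Lemma laplace_pdf_ge0 x : 0 <= laplace_pdf b x.
Proof. by rewrite mulr_ge0 ?expR_ge0 // invr_ge0 mulr_ge0 // ltW. Qed.

Lemma measurable_laplace_pdf : measurable_fun setT (laplace_pdf b).
Proof.
apply: measurable_funM => //; apply: measurableT_comp => //.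
by apply: measurableT_comp => //; apply: measurable_funM.
Qed.

Lemma laplace_pdf_shift_le u w x :
  laplace_pdf b (x - u) <= expR (`|u - w| / b) * laplace_pdf b (x - w).
Proof.
rewrite /laplace_pdf mulrCA ler_pM2l ?invr_gt0 ?mulr_gt0 //.
rewrite -expRD ler_expR -!mulNr -mulrDl ler_pM2r ?invr_gt0 //.
by have := ler_normD (x - u) (u - w); rewrite subrKA; lra.
Qed.

Lemma laplace_shift_le u w A : measurable A ->
  (\int[lebesgue_measure]_(x in shiftR u @^-1` A) (laplace_pdf b x)%:E <=
   (expR (`|u - w| / b))%:E *
     \int[lebesgue_measure]_(x in shiftR w @^-1` A) (laplace_pdf b x)%:E)%E.
Proof.
move=> mA.
have mpdf : measurable_fun setT (EFin \o laplace_pdf b).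
  by apply/measurable_EFinP; exact: measurable_laplace_pdf.
have pdf_ge0 x : (0 <= (laplace_pdf b x)%:E)%E by rewrite lee_fin laplace_pdf_ge0.
have mpdf_shift v : measurable_fun A (fun x => (laplace_pdf b (x - v))%:E).
  by apply: measurable_funTS; exact: measurableT_comp mpdf (measurable_shiftR (- v)).
rewrite !ge0_integral_shiftR // -ge0_integralZl //.
apply: ge0_le_integral => //.
- exact: measurable_funeM (mpdf_shift w).
- by move=> x _; rewrite -EFinM lee_fin laplace_pdf_shift_le.
Qed.

End Laplace.

Lemma floor_divn (R : realType) (x : R) k : (0 < k)%N ->
  Num.floor (x / k%:R) = Num.floor ((Num.floor x)%:~R / k%:R : R).
Proof.
move=> k_gt0; have k_gt0' : 0 < (k%:R : R) by rewrite ltr0n.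
have floor_ge (n : int) :
  (n <= Num.floor (x / k%:R)) = (n <= Num.floor ((Num.floor x)%:~R / k%:R : R)).
  rewrite !floor_ge_int !ler_pdivlMr // -[k%:R]/((k%:Z)%:~R : R) -intrM.
  by rewrite -floor_ge_int ler_int.
by apply/le_anti; rewrite -floor_ge lexx floor_ge lexx.
Qed.

Lemma floor_dyadic_le (R : realType) n m (s t : R) : (n <= m)%N ->
  Num.floor (2 ^+ m * s) = Num.floor (2 ^+ m * t) ->
  Num.floor (2 ^+ n * s) = Num.floor (2 ^+ n * t).
Proof.
move=> le_nm eq_m.
have scale (x : R) : 2 ^+ n * x = 2 ^+ m * x / (2 ^ (m - n))%:R.
  rewrite natrX -[in 2 ^+ m](subnKC le_nm) exprD.
  by field; rewrite expf_neq0.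
by rewrite !scale floor_divn ?expn_gt0 // eq_m -floor_divn ?expn_gt0.
Qed.

Definition dyadic_interval (R : realType) n (z : int) : set R :=
  [set r | Num.floor (2 ^+ n * r) = z].

Lemma measurable_dyadic_interval (R : realType) n z :
  measurable (dyadic_interval n z : set R).
Proof.
have -> : dyadic_interval n z = (fun r : R => 2 ^+ n * r) @^-1` `[z%:~R, (z + 1)%:~R[.
  by apply/seteqP; split => r /=; rewrite in_itv /= -floor_eq => /eqP.
by rewrite -[_ @^-1` _]setTI; apply: measurable_funM.
Qed.

Section DyadicCells.
Variables (R : realType) (J K : nat).
Local Notation mat := 'M[R]_(J, K).
Implicit Types (x y : mat) (A U : set mat).

Definition dyadic_index n x : 'M[int]_(J, K) :=
  \matrix_(j, k) Num.floor (2 ^+ n * x j k).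

Definition dyadic_saturated n A :=
  forall x y, dyadic_index n x = dyadic_index n y -> A x -> A y.

Definition dyadic_sets := [set A | exists n, dyadic_saturated n A].

Lemma dyadic_index_le n m x y : (n <= m)%N ->
  dyadic_index m x = dyadic_index m y -> dyadic_index n x = dyadic_index n y.
Proof.
move=> le_nm /matrixP eq_m; apply/matrixP => j k; rewrite !mxE.
by apply: floor_dyadic_le le_nm _; have := eq_m j k; rewrite !mxE.
Qed.

Lemma dyadic_saturated_le n m A : (n <= m)%N ->
  dyadic_saturated n A -> dyadic_saturated m A.
Proof. by move=> le_nm satA x y /(dyadic_index_le le_nm); exact: satA. Qed.

Lemma setring_dyadic_sets : setring dyadic_sets.
Proof.
split; first by exists 0%N.
- move=> A B [n satA] [m satB]; exists (maxn n m) => x y eq_xy [Ax|Bx].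
  + by left; exact: (dyadic_saturated_le (leq_maxl n m) satA) eq_xy Ax.
  + by right; exact: (dyadic_saturated_le (leq_maxr n m) satB) eq_xy Bx.
- move=> A B [n satA] [m satB]; exists (maxn n m) => x y eq_xy [Ax nBx]; split.
  + exact: (dyadic_saturated_le (leq_maxl n m) satA) eq_xy Ax.
  + by move=> By; apply/nBx/(dyadic_saturated_le (leq_maxr n m) satB (esym eq_xy)).
Qed.

Lemma dyadic_index_close n x y j k :
  dyadic_index n x = dyadic_index n y -> `|x j k - y j k| < (2 ^+ n)^-1.
Proof.
move=> /matrixP /(_ j k); rewrite !mxE => eq_floor.
have pow_gt0 : 0 < (2 : R) ^+ n by rewrite exprn_gt0.
have /andP[x_ge x_lt] := floor_itv (2 ^+ n * x j k).
have /andP[y_ge y_lt] := floor_itv (2 ^+ n * y j k).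
rewrite eq_floor intrD in x_ge x_lt; rewrite intrD in y_lt.
have -> : x j k - y j k = (2 ^+ n)^-1 * (2 ^+ n * x j k - 2 ^+ n * y j k).
  by field; rewrite gt_eqF.
rewrite normrM ger0_norm ?invr_ge0 ?ltW // gtr_pMr ?invr_gt0 // ltr_norml.
by apply/andP; split; lra.
Qed.

Definition dyadic_interior n U :=
  [set x | forall y, dyadic_index n y = dyadic_index n x -> U y].

Lemma dyadic_sets_interior n U : dyadic_sets (dyadic_interior n U).
Proof. by exists n => x y eq_xy /= xU z eq_zy; apply: xU; rewrite eq_zy eq_xy. Qed.

Lemma open_bigcup_dyadic_interior U : open U ->
  U = \bigcup_n dyadic_interior n U.
Proof.
move=> U_open; apply/seteqP; split => [x Ux|x [n _ /= xU]]; last exact: xU.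
have /nbhs_ballP[e e_gt0 e_U] : nbhs x U by exact: open_nbhs_nbhs.
have [N lt_invN] : exists N, (2 ^+ N)^-1 < e.
  exists (Num.trunc e^-1).+1; rewrite invf_plt ?posrE ?exprn_gt0 //.
  apply: lt_le_trans (truncnS_gt _) _; rewrite -natrX ler_nat.
  exact/ltnW/ltn_expl.
exists N => // y eq_yx; apply: e_U; apply/ball_mxE; split => // i j.
exact: lt_trans (dyadic_index_close i j (esym eq_yx)) lt_invN.
Qed.

Lemma mx_borel_sub_dyadic : @mx_borel R J K `<=` <<sr dyadic_sets>>.
Proof.
have [sr0 srD srU] := smallest_sigma_ring dyadic_sets.
have srT : <<sr dyadic_sets>> setT by apply: sub_g_sigma_ring; exists 0%N.
move=> A; apply; split; first by split => // B /(srD _ _ srT).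
move=> U /open_bigcup_dyadic_interior ->; apply: srU => n.
by apply: sub_g_sigma_ring; exact: dyadic_sets_interior.
Qed.

End DyadicCells.

Arguments dyadic_sets {R J K}.

Lemma lee_prod (R : realType) (I : Type) (r : seq I) (a b : I -> \bar R) :
  (forall i, 0 <= a i)%E -> (forall i, a i <= b i)%E ->
  (\prod_(i <- r) a i <= \prod_(i <- r) b i)%E.
Proof.
move=> a_ge0 le_ab; elim: r => [|i r IH]; first by rewrite !big_nil.
by rewrite !big_cons lee_pmul // prode_ge0.
Qed.

Section LaplaceNoise.
Variables (R : realType) (J K : nat) (d : measure_display) (Omega : measurableType d).
Variables (Pr : probability Omega R) (xi : 'I_J -> 'I_K -> Omega -> R) (b : R).
Hypothesis b_gt0 : 0 < b.
Hypothesis xi_measurable : forall j k, measurable_fun setT (xi j k).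
Hypothesis xi_laplace : forall j k (B : set R), measurable B ->
  Pr (xi j k @^-1` B) = (\int[lebesgue_measure]_(x in B) (laplace_pdf b x)%:E)%E.
Hypothesis xi_indep : forall B : 'I_J -> 'I_K -> set R,
  (forall j k, measurable (B j k)) ->
  Pr [set om | forall j k, B j k (xi j k om)] =
  (\prod_(j < J) \prod_(k < K) Pr (xi j k @^-1` B j k))%E.
Local Notation mat := 'M[R]_(J, K).
Implicit Types (u w : mat) (A : set mat).

Definition noise om : mat := \matrix_(j, k) xi j k om.

Definition noise_event u A := (fun om => noise om + u) @^-1` A.

Let cell n s := [set x : mat | dyadic_index n x = s].

Lemma noise_event_cell n s u : noise_event u (cell n s) =
  [set om | forall j k, (shiftR (u j k) @^-1` dyadic_interval n (s j k)) (xi j k om)].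
Proof.
apply/seteqP; split => om /=.
  by move/matrixP => eq_s j k; have := eq_s j k; rewrite !mxE.
by move=> in_s; apply/matrixP => j k; rewrite !mxE; exact: in_s.
Qed.

Let measurable_cell_interval n s u j k :
  measurable (shiftR (u j k) @^-1` dyadic_interval n (s j k)).
Proof.
rewrite -[_ @^-1` _]setTI; apply: measurable_shiftR => //.
exact: measurable_dyadic_interval.
Qed.

Lemma measurable_noise_event_cell n s u : measurable (noise_event u (cell n s)).
Proof.
have -> : noise_event u (cell n s) = \bigcap_(j in setT) \bigcap_(k in setT)
    (xi j k @^-1` (shiftR (u j k) @^-1` dyadic_interval n (s j k))).
  rewrite noise_event_cell; apply/seteqP; split => om /= in_s.
  - by move=> j _ k _; exact: in_s.
  - by move=> j k; exact: in_s j I k I.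
apply: fin_bigcap_measurable => [|j _]; first exact: finite_finset.
apply: fin_bigcap_measurable => [|k _]; first exact: finite_finset.
rewrite -[X in measurable X]setTI; apply: xi_measurable => //.
exact: measurable_cell_interval.
Qed.

Lemma noise_event_cell_le n s u w :
  (Pr (noise_event u (cell n s)) <=
   (expR (l1norm (u - w) / b))%:E * Pr (noise_event w (cell n s)))%E.
Proof.
rewrite !noise_event_cell.
rewrite (xi_indep (B := fun j k => shiftR (u j k) @^-1` dyadic_interval n (s j k)));
  last by move=> j k; exact: measurable_cell_interval.
rewrite (xi_indep (B := fun j k => shiftR (w j k) @^-1` dyadic_interval n (s j k)));
  last by move=> j k; exact: measurable_cell_interval.
have -> : expR (l1norm (u - w) / b) =
    \prod_(j < J) \prod_(k < K) expR (`|u j k - w j k| / b).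
  rewrite /l1norm mulr_suml expR_sum; apply: eq_bigr => j _.
  by rewrite mulr_suml expR_sum; apply: eq_bigr => k _; rewrite !mxE.
rewrite -prodEFin -big_split /=.
apply: lee_prod => [j|j]; first by apply: prode_ge0 => k _; exact: measure_ge0.
rewrite -prodEFin -big_split /=.
apply: lee_prod => [k|k]; first exact: measure_ge0.
rewrite !xi_laplace; last 2 first.
- exact: measurable_cell_interval.
- exact: measurable_cell_interval.
exact: laplace_shift_le (measurable_dyadic_interval _ _).
Qed.

Definition shift_bounded u w := [set A | measurable (noise_event u A) /\
  measurable (noise_event w A) /\
  (Pr (noise_event u A) <= (expR (l1norm (u - w) / b))%:E * Pr (noise_event w A))%E].

Lemma dyadic_sets_shift_bounded u w : dyadic_sets `<=` shift_bounded u w.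
Proof.
move=> A [n satA].
(* A is the disjoint union of the level-n cells it meets, indexed by pickle. *)
pose F k := [set x | A x /\ pickle (dyadic_index n x) = k].
have AF : A = \bigcup_k F k.
  by apply/seteqP; split => [x Ax|x [k _ []] //]; exists (pickle (dyadic_index n x)).
have F_cell k : F k = set0 \/ exists s, F k = cell n s.
  have [[x0 [Ax0 x0k]]|/forallNP F0] := pselect (exists x, F k x); last first.
    by left; apply/seteqP; split => // x /F0.
  right; exists (dyadic_index n x0); apply/seteqP; split => [x [_ xk]|x /= eq_x].
    by apply: (pcan_inj pickleK_inv); rewrite xk x0k.
  by split; [exact: satA (esym eq_x) Ax0 | rewrite eq_x].
have measurable_F v k : measurable (noise_event v (F k)).
  case: (F_cell k) => [->|[s ->]]; last exact: measurable_noise_event_cell.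
  by rewrite /noise_event preimage_set0.
have F_disjoint v : trivIset setT (fun k => noise_event v (F k)).
  apply/trivIsetP => i j _ _; apply: contraNeq => /set0P[om [[_ <-] [_ <-]]].
  by rewrite eqxx.
have noise_eventF v : noise_event v A = \bigcup_k noise_event v (F k).
  by rewrite /noise_event [in LHS]AF preimage_bigcup.
split; first by rewrite noise_eventF; exact: bigcupT_measurable.
split; first by rewrite noise_eventF; exact: bigcupT_measurable.
rewrite !noise_eventF !measure_bigcup // -nneseriesZl => [|i _]; last exact: measure_ge0.
apply: lee_nneseries => [i _ _|k _]; first exact: measure_ge0.
case: (F_cell k) => [->|[s ->]]; last exact: noise_event_cell_le.
by rewrite /noise_event !preimage_set0 measure0 mule0.
Qed.

Lemma shift_bounded_cvg u w (F : nat -> set mat) L :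
  (forall n, shift_bounded u w (F n)) ->
  measurable (noise_event u L) -> measurable (noise_event w L) ->
  Pr (noise_event u (F n)) @[n --> \oo] --> Pr (noise_event u L) ->
  Pr (noise_event w (F n)) @[n --> \oo] --> Pr (noise_event w L) ->
  shift_bounded u w L.
Proof.
move=> F_bnd mLu mLw cvg_u cvg_w; do 2 split => //.
have cvg_w' := cvgeZl (y := (expR (l1norm (u - w) / b))%:E) isT cvg_w.
rewrite -(cvg_lim _ cvg_u) // -(cvg_lim _ cvg_w') //.
apply: lee_lim; [exact: cvgP cvg_u | exact: cvgP cvg_w' |].
by apply: nearW => n; case: (F_bnd n) => _ [].
Qed.

Lemma monotone_shift_bounded u w : monotone (shift_bounded u w).
Proof.
split => F F_mono F_bnd.
- have cvgU v : (forall n, measurable (noise_event v (F n))) ->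
      measurable (noise_event v (\bigcup_n F n)) /\
      Pr (noise_event v (F n)) @[n --> \oo] --> Pr (noise_event v (\bigcup_n F n)).
    rewrite /noise_event preimage_bigcup => mF.
    have mU := bigcupT_measurable _ mF; split => //.
    apply: nondecreasing_cvg_mu => // n m /F_mono /subsetPset F_sub.
    by apply/subsetPset => om; exact: F_sub.
  have [mUu cvgUu] := cvgU u (fun n => (F_bnd n).1).
  have [mUw cvgUw] := cvgU w (fun n => (F_bnd n).2.1).
  exact: shift_bounded_cvg.
- have cvgI v : (forall n, measurable (noise_event v (F n))) ->
      measurable (noise_event v (\bigcap_n F n)) /\
      Pr (noise_event v (F n)) @[n --> \oo] --> Pr (noise_event v (\bigcap_n F n)).
    rewrite /noise_event preimage_bigcap => mF.
    have mI := bigcapT_measurable mF; split => //.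
    apply: nonincreasing_cvg_mu => // [|n m /F_mono /subsetPset F_sub].
      exact: le_lt_trans (probability_le1 _ (mF 0%N)) (ltey _).
    by apply/subsetPset => om; exact: F_sub.
  have [mIu cvgIu] := cvgI u (fun n => (F_bnd n).1).
  have [mIw cvgIw] := cvgI w (fun n => (F_bnd n).2.1).
  exact: shift_bounded_cvg.
Qed.

Lemma noise_event_shift_le u w A e : mx_borel A -> l1norm (u - w) / b <= e ->
  (Pr (noise_event u A) <= (expR e)%:E * Pr (noise_event w A))%E.
Proof.
move=> /mx_borel_sub_dyadic A_dyadic le_e.
have := monotone_setring_sub_g_sigma_ring (monotone_shift_bounded u w)
  (setring_dyadic_sets R J K) (@dyadic_sets_shift_bounded u w).
move/(_ _ A_dyadic) => [_ [_ /le_trans]]; apply.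
by rewrite lee_wpmul2r // lee_fin ler_expR.
Qed.

End LaplaceNoise.

Lemma mx_borel_preimage (R : realType) J1 K1 J2 K2
    (f : 'M[R]_(J1, K1) -> 'M[R]_(J2, K2)) S :
  continuous f -> mx_borel S -> mx_borel (f @^-1` S).
Proof.
move=> /continuousP f_cont S_borel.
apply: (S_borel [set B | mx_borel (f @^-1` B)]); split.
- have [B0 BC BU] := smallest_sigma_algebra setT [set U : set 'M[R]_(J1, K1) | open U].
  split => [|B B_borel|F F_borel] /=.
  + by rewrite preimage_set0.
  + by rewrite setTD preimage_setC -setTD; exact: BC.
  + by rewrite preimage_bigcup; exact: BU.
- by move=> U U_open; apply: sub_sigma_algebra; exact: f_cont.
Qed.
Theorem theorem3 (R : realType) (P J K : nat) (p : 'I_P) (Ip : 'I_P -> nat)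
  (phi : 'M[R]_(J, K) -> 'cV[R]_J -> 'cV[R]_K -> R) (r : 'M[R]_(J, K) -> R)
  (beta : R)
  (fprime : seq (datum R J K) -> 'M[R]_(J, K) -> 'M[R]_(J, K))
  (W : set 'M[R]_(J, K))
  (w lam zt : 'M[R]_(J, K)) (rho delta eps Delta : R)
  (Dp : seq (datum R J K))
  (d : measure_display) (Omega : measurableType d) (Pr : probability Omega R)
  (xi : 'I_J -> 'I_K -> Omega -> R)
  (znext : seq (datum R J K) -> 'M[R]_(J, K) -> 'M[R]_(J, K)) :
  (0 < P)%N -> (0 < J)%N -> (0 < K)%N -> 0 < beta ->
  (* convex loss and regularizer *)
  (forall x y, convex_fun (fun z => phi z x y)) -> convex_fun r ->
  (* f'_p(z; D) is a (fixed) subgradient of f_p(.; D) at z *)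
  (forall D z, is_subgradient
     (fobj (\sum_(q < P) Ip q) P beta phi r D) z (fprime D z)) ->
  (* W compact convex *)
  compact W -> convex_mset W ->
  0 < rho -> 0 < delta -> 0 < eps ->
  (* the data of agent p *)
  size Dp = Ip p ->
  (* Delta = max over neighbours of the l1-sensitivity *)
  (forall D', neighbor Dp D' -> l1norm (fprime Dp zt - fprime D' zt) <= Delta) ->
  (exists D', neighbor Dp D' /\ l1norm (fprime Dp zt - fprime D' zt) = Delta) ->
  (* noise entries: random variables *)
  (forall j k, measurable_fun setT (xi j k)) ->
  (* each entry Laplace(0, Delta / eps) *)
  (forall j k (B : set R), measurable B ->
     Pr (xi j k @^-1` B) =
     (\int[lebesgue_measure]_(x in B) (laplace_pdf (Delta / eps) x)%:E)%E) ->
  (* entries mutually independent *)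
  (forall B : 'I_J -> 'I_K -> set R, (forall j k, measurable (B j k)) ->
     Pr [set om | forall j k, B j k (xi j k om)] =
     (\prod_(j < J) \prod_(k < K) Pr (xi j k @^-1` B j k))%E) ->
  (* znext D xi0 is the argmin of G^t(.; D, xi0) over W /\ hat W^t_p *)
  (forall D (xi0 : 'M[R]_(J, K)),
     (W `&` [set z | fnorm (z - zt) <= delta]) (znext D xi0) /\
     (forall z, (W `&` [set z | fnorm (z - zt) <= delta]) z ->
        Gobj (fprime D zt) w lam xi0 rho (znext D xi0)
          <= Gobj (fprime D zt) w lam xi0 rho z)) ->
  forall S : set 'M[R]_(J, K), mx_borel S ->
  forall D', neighbor Dp D' ->
  ((expR (- eps))%:E *
     Pr [set om | S (znext D' (\matrix_(j, k) xi j k om))]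
   <= Pr [set om | S (znext Dp (\matrix_(j, k) xi j k om))]
   /\
   Pr [set om | S (znext Dp (\matrix_(j, k) xi j k om))]
   <= (expR eps)%:E *
      Pr [set om | S (znext D' (\matrix_(j, k) xi j k om))])%E.
Proof.
move=> _ J_gt0 K_gt0 _ _ _ _ _ W_convex rho_gt0 _ eps_gt0 _ sens_le [D0 [_ sens_eq]]
  xi_meas xi_law xi_indep znext_argmin S S_borel D' neighbor_D'.
have b_gt0 : 0 < Delta / eps.
  have Delta_ge0 : 0 <= Delta by rewrite -sens_eq l1norm_ge0.
  rewrite lt_def (laplace_law_scale_neq0 (xi_law (Ordinal J_gt0) (Ordinal K_gt0))).
  by rewrite divr_ge0 // ltW.
pose v := fprime D' zt - fprime Dp zt.
pose A := znext Dp @^-1` S.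
have A_borel : mx_borel A.
  apply: mx_borel_preimage S_borel => xi0.
  exact: (argmin_continuous (g := fprime Dp zt) rho_gt0 W_convex (znext_argmin Dp)).
have shift_D' xi0 : znext D' xi0 = znext Dp (xi0 + v).
  exact: (argmin_shift_noise rho_gt0 W_convex (g := fprime Dp zt) (g' := fprime D' zt)
    (znext_argmin D' xi0) (znext_argmin Dp _)).
have -> : [set om | S (znext D' (\matrix_(j, k) xi j k om))] = noise_event xi v A.
  by apply/seteqP; split => om; rewrite /= shift_D'.
have -> : [set om | S (znext Dp (\matrix_(j, k) xi j k om))] = noise_event xi 0 A.
  by apply/seteqP; split => om; rewrite /noise_event /= addr0.
have v_le : l1norm v / (Delta / eps) <= eps.
  rewrite ler_pdivrMr // mulrCA divff ?gt_eqF // mulr1 -l1normN opprB; exact: sens_le.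
have le_D' : (Pr (noise_event xi v A) <= (expR eps)%:E * Pr (noise_event xi 0 A))%E.
  by apply: (noise_event_shift_le b_gt0 xi_meas xi_law xi_indep) => //; rewrite subr0.
split; first apply: le_trans (lee_wpmul2l _ le_D') _.
- by rewrite lee_fin expR_ge0.
- by rewrite muleA -EFinM -expRD addNr expR0 mul1e.
- apply: (noise_event_shift_le b_gt0 xi_meas xi_law xi_indep) => //.
  by rewrite sub0r l1normN.
Qed.
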